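(* Let $p$ be a prime number, let $G\simeq C_2\oplus C_{2p}$, and let $f$ be an automorphism of $\mathcal{P}_{0}(G)$ with trivial pullback. Then $f$ is the identity.
   Context: For an additively written finite abelian group $G$, $\mathcal{P}_{0}(G)$ is the monoid of all subsets of $G$ containing $0$, with setwise addition and identity $\{0\}$. An automorphism $f$ of $\mathcal{P}_0(G)$ has trivial pullback if $f(\{0,a\})=\{0,a\}$ for all $a\in G$. $C_n$ denotes the cyclic group of order $n$. *)

From HB Require Import structures.
From mathcomp Require Import all_boot all_order all_algebra.
Set Implicit Arguments. Unset Strict Implicit. Unset Printing Implicit Defensive.
Import GRing.Theory.
Local Open Scope ring_scope.

Definition sumset (G : finZmodType) (A B : {set G}) : {set G} :=
  [set a + b | a in A, b in B].

Definition P0 (G : finZmodType) := {A : {set G} | 0 \in A}.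

Lemma sumset_P0 (G : finZmodType) (A B : P0 G) : 0 \in sumset (val A) (val B).
Proof.
apply/imset2P; exists 0 0; rewrite ?addr0 //; [exact: (valP A)|exact: (valP B)].
Qed.

Definition P0add (G : finZmodType) (A B : P0 G) : P0 G :=
  exist _ (sumset (val A) (val B)) (sumset_P0 A B).

Definition P0one (G : finZmodType) : P0 G := exist _ [set 0] (set11 0).

Definition P0pair (G : finZmodType) (a : G) : P0 G :=
  exist _ [set 0; a] (setU11 0 [set a]).

Definition P0_automorphism (G : finZmodType) (f : P0 G -> P0 G) : Prop :=
  [/\ bijective f,
      forall A B, f (P0add A B) = P0add (f A) (f B)
    & f (P0one G) = P0one G].

Definition trivial_pullback (G : finZmodType) (f : P0 G -> P0 G) : Prop :=
  forall a : G, f (P0pair a) = P0pair a.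

Definition iso_C2_Cn (G : finZmodType) (n : nat) : Prop :=
  exists phi : 'Z_2 * 'Z_n -> G, bijective phi /\ {morph phi : x y / x + y}.

From mathcomp Require Import all_boot all_order all_algebra.
Set Implicit Arguments. Unset Strict Implicit. Unset Printing Implicit Defensive.
Import GRing.Theory.
Local Open Scope ring_scope.

(* Write C for the complement ("holes") of A in G.  Trivial pullback means that
   f commutes with A |-> A + {0,x}, whose holes are C :&: (C + x); as f is also
   injective and fixes G, it preserves whether C :&: (C + x) is empty.  Call x
   a period of A if A + {0,x} = A, and induct on |C|.  If two holes differ
   by a non-period x, the fixed sets A + {0,x} have fewer holes and determine
   the holes of both A and f A.  If C is a coset of the period group, remove a
   point e from A: f A = f (A \ {e}) + {0,x} for a nonzero period x, and the sets
   (A \ {e}) + {0, c - e}, c in C, have at most two holes.  For one hole,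
   f (G \ {g}) = G \ {s g}, and s g - g does not depend on g as soon as some w
   has 2w <> 0; as s never vanishes, s g = g.  Such a w is all that is used
   about C_2 (+) C_2p. *)

Lemma subr_eql (V : zmodType) (x y : V) : (x - y == x) = (y == 0).
Proof. by rewrite -{2}[x]subr0 (inj_eq (addrI x)) eqr_opp. Qed.

Lemma subrB_eq (V : zmodType) (x y : V) : (x - (y - x) == y) = ((y - x) *+ 2 == 0).
Proof. by rewrite subr_eq eq_sym -subr_eq0 addrAC -mulr2n. Qed.

Section Holes.

Variable G : finZmodType.
Implicit Types (A : P0 G) (c e g x z : G).

Definition holes A : {set G} := ~: val A.

Lemma in_holes A z : (z \in holes A) = (z \notin val A).
Proof. by rewrite inE. Qed.

Lemma holes_inj : injective holes.
Proof. by move=> A B /setC_inj /val_inj. Qed.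

Lemma holes0 A : 0 \notin holes A.
Proof. by rewrite in_holes negbK (valP A). Qed.

Definition P0setT : P0 G := exist _ [set: G] (in_setT 0).

Lemma holes_setT : holes P0setT = set0.
Proof. exact: setCT. Qed.

Lemma holes_eq0 A : (holes A == set0) = (A == P0setT).
Proof. by rewrite -holes_setT (inj_eq holes_inj). Qed.

Lemma P0addTl A : P0add P0setT A = P0setT.
Proof.
apply: val_inj; apply/setP => z; rewrite inE; apply/imset2P.
by exists z 0; rewrite ?inE ?addr0 //; apply: (valP A).
Qed.

Lemma P0addT A : P0add A P0setT = P0setT.
Proof.
apply: val_inj; apply/setP => z; rewrite inE; apply/imset2P.
by exists 0 z; rewrite ?inE ?add0r //; apply: (valP A).
Qed.

Definition addp A x : P0 G := P0add A (P0pair x).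

Lemma in_holes_addp A x z :
  (z \in holes (addp A x)) = (z \in holes A) && (z - x \in holes A).
Proof.
rewrite !in_holes -negb_or; congr negb.
apply/imset2P/orP => [[a y aA] | [zA | zxA]].
- by rewrite !inE => /orP[] /eqP -> ->; [left; rewrite addr0 | right; rewrite addrK].
- by exists z 0; rewrite ?inE ?eqxx ?addr0.
- by exists (z - x) x; rewrite ?inE ?eqxx ?orbT ?subrK.
Qed.

Lemma holes_addp_sub A x : holes (addp A x) \subset holes A.
Proof. by apply/subsetP => z; rewrite in_holes_addp => /andP[]. Qed.

Lemma card_holes_addp_lt A x :
  addp A x != A -> (#|holes (addp A x)| < #|holes A|)%N.
Proof.
move=> neqA; apply: proper_card; rewrite properEneq holes_addp_sub andbT.
by rewrite (inj_eq holes_inj).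
Qed.

Lemma addp_idP A x :
  reflect {in holes A, forall z, z - x \in holes A} (addp A x == A).
Proof.
apply: (iffP eqP) => [addpA z | per].
  by rewrite -{1}addpA in_holes_addp => /andP[].
apply: holes_inj; apply/setP => z; rewrite in_holes_addp.
by case: (boolP (z \in holes A)) => // /per ->.
Qed.

Lemma addp_idN A x : addp A x = A -> addp A (- x) = A.
Proof.
move/eqP/addp_idP => per; apply/eqP/addp_idP => z zA; rewrite opprK.
have transl : [set y - x | y in holes A] = holes A.
  apply/eqP; rewrite eqEcard card_imset; last exact: addIr.
  rewrite leqnn andbT; apply/subsetP => _ /imsetP[y yA ->]; exact: per.
by move: zA; rewrite -{1}transl => /imsetP[y yA ->]; rewrite subrK.
Qed.

Lemma addp_idB A x y : addp A x = A -> addp A y = A -> addp A (x - y) = A.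
Proof.
move=> /eqP/addp_idP perx /addp_idN/eqP/addp_idP pery.
by apply/eqP/addp_idP => z /perx/pery; rewrite opprD !opprK addrA.
Qed.

Definition P0setD1 A e : P0 G := exist _ (0 |: (val A :\ e)) (setU11 0 _).

Lemma holes_P0setD1 A e : e != 0 -> holes (P0setD1 A e) = e |: holes A.
Proof.
move=> e0; apply/setP => z; rewrite !inE negb_or negb_and negbK.
by case: eqVneq => [->|//]; rewrite eq_sym (negbTE e0) (valP A).
Qed.

Definition P0setC1 g : P0 G := P0setD1 P0setT g.

Lemma holes_P0setC1 g : g != 0 -> holes (P0setC1 g) = [set g].
Proof. by move=> g0; rewrite holes_P0setD1 // holes_setT setU0. Qed.

Lemma P0_automorphism_setT f : P0_automorphism f -> f P0setT = P0setT.
Proof.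
case=> [[g _ gK] f_hom _].
by rewrite -{1}(P0addTl (g P0setT)) f_hom gK P0addT.
Qed.

Lemma iso_C2_Cn_double_neq0 n :
  (2 < n)%N -> iso_C2_Cn G n -> exists w : G, w *+ 2 != 0.
Proof.
move=> n_gt2 [phi [[? phiK _] phiD]].
have phi0 : phi 0 = 0 by apply: (addrI (phi 0)); rewrite -phiD !addr0.
exists (phi (0, 1)); rewrite mulr2n -phiD -phi0 (inj_eq (can_inj phiK)).
have n_gt1 : (1 < n)%N by apply: ltnW.
apply/negP => /eqP/(congr1 snd)/eqP; rewrite -val_eqE /= Zp_cast //.
by rewrite !modn_small.
Qed.

Definition coset_holes A :=
  forall c c', c \in holes A -> c' \in holes A -> addp A (c - c') = A.

Lemma holes_addp_P0setD1_sub A c e :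
  coset_holes A -> c \in holes A -> e \notin holes A -> e != 0 ->
  holes (addp (P0setD1 A e) (c - e)) \subset [set c; e].
Proof.
move=> cosA cA eA e0; apply/subsetP => z.
rewrite in_set2 in_holes_addp holes_P0setD1 // !in_setU1.
case/andP => /orP[-> | zA]; first by rewrite orbT.
case/orP => [| zcA]; first by rewrite subr_eq subrKC => ->.
have /eqP/addp_idP/(_ c cA) := cosA _ _ zA zcA.
by rewrite subKr subKr (negbTE eA).
Qed.

End Holes.

Section TrivialPullback.

Variables (G : finZmodType) (f : P0 G -> P0 G).
Hypothesis f_inj : injective f.
Hypothesis f_addp : forall A x, f (addp A x) = addp (f A) x.
Hypothesis f_setT : f (P0setT G) = P0setT G.
Implicit Types (A B : P0 G) (a b c e g x : G).

Lemma holes_f_eq0 A : (holes (f A) == set0) = (holes A == set0).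
Proof. by rewrite !holes_eq0 -{1}f_setT (inj_eq f_inj). Qed.

Lemma fixed_not_coset_holes A a b :
  a \in holes A -> b \in holes A -> addp A (a - b) != A ->
  (forall x, addp A x != A -> f (addp A x) = addp A x) -> f A = A.
Proof.
move=> aA bA nab fixA.
have nonper c : (addp A (c - a) != A) || (addp A (c - b) != A).
  rewrite -negb_and; apply: contra nab => /andP[/eqP pa /eqP pb].
  by have := addp_idB pb pa; rewrite opprB (addrC (c - b)) addrA subrK => ->.
have holes_fix x : addp A x != A -> forall c,
    (c \in holes A) && (c - x \in holes A) =
    (c \in holes (f A)) && (c - x \in holes (f A)).
  by move/fixA => fx c; rewrite -!in_holes_addp -f_addp fx.
have subAf : holes A \subset holes (f A).
  apply/subsetP => c cA; case/orP: (nonper c) => /holes_fix/(_ c).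
    by rewrite subKr cA aA => /esym/andP[].
  by rewrite subKr cA bA => /esym/andP[].
apply: holes_inj; apply/eqP; rewrite eqEsubset subAf andbT.
apply/subsetP => c cfA; case/orP: (nonper c) => /holes_fix/(_ c).
  by rewrite subKr cfA (subsetP subAf _ aA) => /andP[].
by rewrite subKr cfA (subsetP subAf _ bA) => /andP[].
Qed.

Lemma fixed_coset_holes A c1 c2 e :
  coset_holes A -> c1 \in holes A -> c2 \in holes A -> c1 != c2 ->
  e \notin holes A -> e != 0 ->
  (forall c, c \in holes A ->
     f (addp (P0setD1 A e) (c - e)) = addp (P0setD1 A e) (c - e)) ->
  f A = A.
Proof.
move=> cosA c1A c2A c12 eA e0 fixK; set K := P0setD1 A e.
have holesK : holes K = e |: holes A by exact: holes_P0setD1.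
have /eqP/addp_idP per12 := cosA _ _ c1A c2A.
have /eqP/addp_idP per21 := cosA _ _ c2A c1A.
have AK : A = addp K (c1 - c2).
  apply: holes_inj; apply/setP => z; rewrite in_holes_addp holesK !in_setU1.
  have [-> | _] /= := eqVneq z e.
    2: by case zA: (z \in holes A); rewrite //= per12 ?orbT.
  rewrite (negbTE eA) subr_eql subr_eq0 (negbTE c12).
  apply/esym/negP => /per21.
  by rewrite opprB addrK (negbTE eA).
have subAfK : holes A \subset holes (f K).
  apply/subsetP => c cA.
  have : c \in holes (addp K (c - e)).
    by rewrite in_holes_addp subKr holesK !in_setU1 cA eqxx orbT.
  by rewrite -fixK // f_addp in_holes_addp => /andP[].
have fA : f A = addp (f K) (c1 - c2) by rewrite {1}AK f_addp.
have subAf : holes A \subset holes (f A).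
  apply/subsetP => c cA; rewrite fA in_holes_addp.
  by rewrite !(subsetP subAfK) ?per12.
apply: holes_inj; apply/eqP; rewrite eqEsubset subAf andbT.
apply/subsetP => d dfA.
have : holes (addp A (c1 - d)) != set0.
  rewrite -holes_f_eq0 f_addp; apply/set0Pn; exists c1.
  by rewrite in_holes_addp subKr dfA (subsetP subAf).
case/set0Pn => z; rewrite in_holes_addp => /andP[zA zdA].
by have /eqP/addp_idP/(_ c1 c1A) := cosA _ _ zA zdA; rewrite !subKr.
Qed.

Lemma f_P0setC1 g : g != 0 -> exists2 s, s != 0 & f (P0setC1 g) = P0setC1 s.
Proof.
move=> g0; have : holes (f (P0setC1 g)) != set0.
  by rewrite holes_f_eq0 holes_P0setC1 //; apply/set0Pn; exists g; rewrite set11.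
case/set0Pn => s sf; have s0 : s != 0 by apply: contraTneq sf => ->; apply: holes0.
exists s => //; apply: holes_inj; rewrite holes_P0setC1 //; apply/setP => z.
rewrite in_set1; apply/idP/eqP => [zf | -> //].
have : holes (addp (P0setC1 g) (s - z)) != set0.
  by rewrite -holes_f_eq0 f_addp; apply/set0Pn; exists s; rewrite in_holes_addp subKr sf.
case/set0Pn => y; rewrite in_holes_addp holes_P0setC1 // !in_set1.
by case/andP => /eqP-> /eqP/eqP; rewrite subr_eql subr_eq0 => /eqP.
Qed.

Lemma addp_P0setC1_setD1 g e : g != 0 -> e != 0 -> (g - e) *+ 2 != 0 ->
  addp (P0setD1 (P0setC1 g) e) (g - e) = P0setC1 g.
Proof.
move=> g0 e0 ge2; apply: holes_inj; apply/setP => z.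
rewrite in_holes_addp holes_P0setD1 // holes_P0setC1 // !in_setU1 !in_set1.
have [-> | zg] := eqVneq z g; first by rewrite subKr !eqxx orbT.
have [-> /= | //] := eqVneq z e; rewrite subr_eql subr_eq0.
rewrite subrB_eq (negbTE ge2) orbF; apply/negbTE; apply: contra ge2 => /eqP->.
by rewrite subrr mul0rn.
Qed.

Lemma f_P0setC1_shift g e sg se :
  g != 0 -> e != 0 -> sg != 0 -> se != 0 -> (g - e) *+ 2 != 0 ->
  f (P0setC1 g) = P0setC1 sg -> f (P0setC1 e) = P0setC1 se -> sg - g = se - e.
Proof.
move=> g0 e0 sg0 se0 ge2 fg fe; set K := P0setD1 (P0setC1 g) e.
have Kg := addp_P0setC1_setD1 g0 e0 ge2.
have Ke : addp K (e - g) = P0setC1 e.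
  have -> : K = P0setD1 (P0setC1 e) g.
    by apply: holes_inj; rewrite !holes_P0setD1 // holes_setT !setU0 setUC.
  by apply: addp_P0setC1_setD1; rewrite // -opprB mulNrn oppr_eq0.
have : se \in holes (f (P0setC1 e)) by rewrite fe holes_P0setC1 ?set11.
rewrite -Ke f_addp in_holes_addp => /andP[seK seK'].
have : se - (e - g) \in holes (f (P0setC1 g)).
  by rewrite -Kg f_addp in_holes_addp seK' -[g - e]opprB opprK subrK.
rewrite fg holes_P0setC1 // in_set1 => /eqP <-.
by rewrite opprB addrA addrAC addrK.
Qed.

Variable w : G.
Hypothesis w_double : w *+ 2 != 0.

Lemma exists_double_neq0_addr a : exists2 u, u *+ 2 != 0 & u + a != 0.
Proof.
have [wa | ] := eqVneq (w + a) 0; last by exists w.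
have aw : a = - w by apply/eqP; rewrite -addr_eq0 addrC wa.
exists (- w); first by rewrite mulNrn oppr_eq0.
by rewrite aw -opprD oppr_eq0 -mulr2n.
Qed.

Lemma f_P0setC1_shift_const g e sg se :
  g != 0 -> e != 0 -> sg != 0 -> se != 0 ->
  f (P0setC1 g) = P0setC1 sg -> f (P0setC1 e) = P0setC1 se -> sg - g = se - e.
Proof.
move=> g0 e0 sg0 se0 fg fe.
have [ge2 | ge2] := eqVneq ((g - e) *+ 2) 0; last exact: f_P0setC1_shift.
have [v v2 u0] := exists_double_neq0_addr g; set u := v + g in u0.
have [su su0 fu] := f_P0setC1 u0.
have ug : (u - g) *+ 2 != 0 by rewrite addrK.
have ue : (u - e) *+ 2 != 0 by rewrite -(subrKA g) mulrnDl ge2 addr0.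
rewrite -(f_P0setC1_shift u0 g0 su0 sg0 ug fu fg).
exact: f_P0setC1_shift u0 e0 su0 se0 ue fu fe.
Qed.

Lemma fixed_P0setC1 g : g != 0 -> f (P0setC1 g) = P0setC1 g.
Proof.
move=> g0; have [s s0 fg] := f_P0setC1 g0; rewrite fg; congr P0setC1.
apply/eqP; rewrite -subr_eq0; apply/negP => /negP t0.
have h0 : - (s - g) != 0 by rewrite oppr_eq0.
have [sh sh0 fh] := f_P0setC1 h0.
have := f_P0setC1_shift_const h0 g0 sh0 s0 fh fg.
by rewrite opprK -{2}[s - g]add0r => /addIr sh_eq0; rewrite sh_eq0 eqxx in sh0.
Qed.

Lemma fixed_holes_le1 A : (#|holes A| <= 1)%N -> f A = A.
Proof.
rewrite leq_eqVlt ltnS leqn0 => /orP[/cards1P[g Ag] | /eqP/cards0_eq A0].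
  have g0 : g != 0 by apply: contraTneq (holes0 A) => <-; rewrite Ag set11.
  have -> : A = P0setC1 g by apply: holes_inj; rewrite holes_P0setC1.
  exact: fixed_P0setC1.
have -> : A = P0setT G by apply/eqP; rewrite -holes_eq0 A0.
exact: f_setT.
Qed.

Lemma fixed_two_holes A a b :
  holes A \subset [set a; b] -> (a - b) *+ 2 != 0 -> f A = A.
Proof.
move=> subAab ab2; have [le1 | gt1] := leqP #|holes A| 1.
  exact: fixed_holes_le1.
have eqAab : holes A = [set a; b].
  apply/eqP; rewrite eqEcard subAab cards2.
  by case: (_ != _); [exact: gt1 | exact: ltnW].
have aA : a \in holes A by rewrite eqAab set21.
have bA : b \in holes A by rewrite eqAab set22.
apply: (fixed_not_coset_holes aA bA) => [|x /card_holes_addp_lt lt_x].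
  apply/negP => /addp_idP/(_ b bA); rewrite eqAab in_set2 subrB_eq subr_eql.
  by rewrite (negbTE ab2) subr_eq0 => /eqP ab; rewrite ab subrr mul0rn eqxx in ab2.
by apply: fixed_holes_le1; rewrite -ltnS (leq_trans lt_x) // eqAab cards2; case: (_ != _).
Qed.

Lemma fixed_holes_le2 A : (#|holes A| <= 2)%N -> f A = A.
Proof.
move=> le2; have [le1 | gt1] := leqP #|holes A| 1; first exact: fixed_holes_le1.
have [c1 [c2 [c1A c2A c12]]] := card_gt1P gt1.
have eqA : holes A = [set c1; c2].
  apply/esym/eqP; rewrite eqEcard cards2 c12 le2 andbT.
  by apply/subsetP => z; rewrite in_set2 => /orP[] /eqP->.
have [d2 | d2] := eqVneq ((c1 - c2) *+ 2) 0.
  2: by apply: fixed_two_holes d2; rewrite eqA.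
have c21 : c2 - c1 = c1 - c2.
  by rewrite -opprB; apply/eqP; rewrite eq_sym -addr_eq0 -mulr2n d2.
have per12 : {in holes A, forall z, z - (c1 - c2) \in holes A}.
  move=> z; rewrite eqA !in_set2 => /orP[] /eqP->; last rewrite -{1}c21;
    by rewrite subKr eqxx ?orbT.
have cosA : coset_holes A.
  move=> c c'; rewrite eqA !in_set2 => /orP[] /eqP-> /orP[] /eqP->;
    rewrite ?subrr ?c21; apply/eqP/addp_idP => z; rewrite ?subr0 //; exact: per12.
(* (c - e) *+ 2 = - u *+ 2 for both holes c, so no set with holes {c, e} is a
   coset. *)
have [u u2 e0] := exists_double_neq0_addr c1; set e := u + c1 in e0.
have ce2 c : c \in holes A -> (c - e) *+ 2 != 0.
  rewrite opprD addrA addrAC mulrnBl eqA in_set2 => /orP[] /eqP->.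
    by rewrite subrr mul0rn sub0r oppr_eq0.
  by rewrite c21 d2 sub0r oppr_eq0.
have eA : e \notin holes A by apply/negP => /ce2; rewrite subrr mul0rn eqxx.
apply: (fixed_coset_holes cosA c1A c2A c12 eA e0) => c cA.
exact: fixed_two_holes (holes_addp_P0setD1_sub cosA cA eA e0) (ce2 c cA).
Qed.

Lemma fixed_P0 A : f A = A.
Proof.
have [n] := ubnP #|holes A|; elim: n A => // n IHn A ltAn.
have IH B : (#|holes B| < #|holes A|)%N -> f B = B.
  by move=> ltBA; apply: IHn; apply: leq_trans ltBA _.
have [le2 | gt2] := leqP #|holes A| 2; first exact: fixed_holes_le2.
case: (boolP [exists a, exists b,
                [&& a \in holes A, b \in holes A & addp A (a - b) != A]]).
  case/existsP => a /existsP[b /and3P[aA bA nab]].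
  by apply: (fixed_not_coset_holes aA bA nab) => x /card_holes_addp_lt /IH.
move/existsPn => per.
have cosA : coset_holes A.
  move=> c c' cA c'A; apply/eqP.
  by have /existsPn/(_ c') := per c; rewrite cA c'A negbK.
have [c1 [c2 [c1A c2A c12]]] := card_gt1P (ltnW gt2).
have e0 : c1 - c2 != 0 by rewrite subr_eq0.
have eA : c1 - c2 \notin holes A.
  apply/negP => eA; have /eqP/addp_idP/(_ _ eA) := cosA _ _ c1A c2A.
  by rewrite subrr (negbTE (holes0 A)).
apply: (fixed_coset_holes cosA c1A c2A c12 eA e0) => c cA; apply: IH.
have sub_ce := holes_addp_P0setD1_sub cosA cA eA e0.
apply: leq_ltn_trans gt2; apply: leq_trans (subset_leq_card sub_ce) _.
by rewrite cards2; case: (_ != _).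
Qed.

End TrivialPullback.

Theorem lemma3p6 (p : nat) (G : finZmodType) (f : P0 G -> P0 G) :
  prime p -> iso_C2_Cn G (2 * p) ->
  P0_automorphism f -> trivial_pullback f ->
  forall A : P0 G, f A = A.
Proof.
move=> p_prime isoG autf f_pair A.
have [[g fK _] f_hom _] := autf.
have [w w2] : exists w : G, w *+ 2 != 0.
  apply: iso_C2_Cn_double_neq0 isoG.
  by rewrite -[X in (X < _)%N]muln1 ltn_pmul2l ?prime_gt1.
apply: (fixed_P0 (can_inj fK) _ (P0_automorphism_setT autf) w2) => B x.
by rewrite /addp f_hom f_pair.
Qed.
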